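(* Let $w\in\mathbb{R}^n$, $w\ge0$. The set of all bilevel feasible decompositions of $w$ is convex.
   Context: Multi-commodity network pricing setting: $G=(\mathcal{V},\mathcal{A})$ directed graph with arc costs $c\ge0$, nonempty tolled arc set $\mathcal{A}_1\subsetneq\mathcal{A}$, $n=|\mathcal{A}_1|$, $N$ node–arc incidence matrix; finite set $\mathcal{K}$ of commodities, commodity $k$ having origin $o^k$ and destination $d^k$ connected by a path of arcs not in $\mathcal{A}_1$; $b^k_{o^k}=1$, $b^k_{d^k}=-1$, other entries $0$; $\mathcal{X}^k=\{x\in\mathbb{R}^{\mathcal{A}}: Nx=b^k,\ x\ge0\}$; $x_{\mathcal{A}_1}$ is the restriction of $x$ to $\mathcal{A}_1$. For $t\in\mathbb{R}^n$ let $f^k(t)=\min\{c^\top x+t^\top x_{\mathcal{A}_1}: x\in\mathcal{X}^k\}$ if $t\ge0$, $-\infty$ otherwise; $f=\sum_k f^k$; $g^k(w)=\sup_t\{f^k(t)-t^\top w\}$, $g(w)=\sup_t\{f(t)-t^\top w\}$. A decomposition of $w$ is a tuple $(w^k)_{k\in\mathcal{K}}$ of vectors $w^k\in\mathbb{R}^n$, $w^k\ge0$, with $\sum_{k}w^k=w$; it is bilevel feasible if $g(w)=\sum_{k\in\mathcal{K}}g^k(w^k)$. *)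

From HB Require Import structures.
From mathcomp Require Import all_boot all_order all_algebra.
From mathcomp Require Import boolp classical_sets reals constructive_ereal ereal.
Set Implicit Arguments. Unset Strict Implicit. Unset Printing Implicit Defensive.
Import Order.TTheory GRing.Theory Num.Theory.
Local Open Scope ring_scope.
Local Open Scope classical_set_scope.

Section Defs.
Variables (R : realType) (V A : finType) (src dst : A -> V) (c : A -> R)
  (A1 : {set A}) (K : finType) (o d : K -> V).

(* index type of the tolled arcs: R^n with n = #|A1| is (tolled -> R) *)
Definition tolled := {a : A | a \in A1}.

Definition untolled_rel : rel V :=
  fun u v => [exists a : A, [&& a \notin A1, src a == u & dst a == v]].

(* N x = b for node-arc incidence matrix N (+1 tail, -1 head),
   b_s = 1, b_t = -1, 0 elsewhere; X = {x | N x = b, x >= 0} *)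
Definition flow_set (s t : V) : set (A -> R) :=
  [set x | (forall a, 0 <= x a) /\
     forall v : V, \sum_(a | src a == v) x a - \sum_(a | dst a == v) x a
                   = (if v == s then 1 else 0) - (if v == t then 1 else 0)].

Definition restrA1 (x : A -> R) : tolled -> R := fun i => x (val i).

Definition dotT (t u : tolled -> R) : R := \sum_(i : tolled) t i * u i.

Definition nonnegT (t : tolled -> R) : Prop := forall i, 0 <= t i.

Definition fk (k : K) (t : tolled -> R) : \bar R :=
  if `[< nonnegT t >] then
    ereal_inf [set ((\sum_a c a * x a) + dotT t (restrA1 x))%:E
              | x in flow_set (o k) (d k)]
  else -oo%E.

Definition f (t : tolled -> R) : \bar R := (\sum_(k : K) fk k t)%E.

Definition gk (k : K) (w : tolled -> R) : \bar R :=
  ereal_sup (range (fun t => (fk k t - (dotT t w)%:E)%E)).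

Definition g (w : tolled -> R) : \bar R :=
  ereal_sup (range (fun t => (f t - (dotT t w)%:E)%E)).

Definition decomposition (w : tolled -> R) (W : K -> tolled -> R) : Prop :=
  (forall k i, 0 <= W k i) /\ (forall i, \sum_(k : K) W k i = w i).

Definition bilevel_feasible (w : tolled -> R) (W : K -> tolled -> R) : Prop :=
  decomposition w W /\ g w = (\sum_(k : K) gk k (W k))%E.

End Defs.

(** The decomposition constraints are linear, so only the equation
    g(w) = sum_k g^k(w^k) needs an argument. Each g^k is the conjugate-type
    function w |-> sup_t f^k(t) - t.w, a supremum of affine functions of w,
    hence convex; and g(w) <= sum_k g^k(w^k) for every decomposition, because
    sup_t sum_k (f^k(t) - t.w^k) <= sum_k sup_t (f^k(t) - t.w^k). Both
    decompositions attain the bound g(w), so by convexity their convex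
    combination satisfies sum_k g^k <= g(w), and equality follows. The values
    g^k are nonnegative (take t = 0, where f^k(0) >= 0 as c >= 0), which is
    what lets the weights lam and 1 - lam distribute over sums of extended
    reals. *)
From HB Require Import structures.
From mathcomp Require Import all_boot all_order all_algebra.
From mathcomp Require Import boolp classical_sets reals constructive_ereal ereal.
From mathcomp Require Import ring.
Set Implicit Arguments. Unset Strict Implicit. Unset Printing Implicit Defensive.
Import Order.TTheory GRing.Theory Num.Theory.
Local Open Scope ring_scope.

Section Conjugate.
Variables (R : realType) (I : finType).

(* With this sign convention [gk k] is [conjugate (fk k)] and [g] is
   [conjugate f], definitionally. *)
Definition conjugate (F : (I -> R) -> \bar R) (w : I -> R) : \bar R :=
  ereal_sup (range (fun t => (F t - (\sum_i t i * w i)%:E)%E)).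

Lemma conjugate_ub (F : (I -> R) -> \bar R) (w t : I -> R) :
  (F t - (\sum_i t i * w i)%:E <= conjugate F w)%E.
Proof. by apply: ereal_sup_ubound; exists t. Qed.

Lemma conjugate_ge0 (F : (I -> R) -> \bar R) (w : I -> R) :
  (0 <= F (fun=> 0%R))%E -> (0 <= conjugate F w)%E.
Proof.
move=> F0_ge0; apply: le_trans (conjugate_ub F w (fun=> 0)).
by rewrite big1 ?sube0 // => i _; rewrite mul0r.
Qed.

Lemma convex_comb_id (lam : R) (x : \bar R) : 0 <= lam <= 1 ->
  (lam%:E * x + (1 - lam)%:E * x)%E = x.
Proof.
case/andP=> lam_ge0 lam_le1.
by rewrite -ge0_muleDl ?lee_fin ?subr_ge0 // -EFinD addrC subrK mul1e.
Qed.

Lemma sum_mul_convex (t a b : I -> R) (lam : R) :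
  \sum_i t i * (lam * a i + (1 - lam) * b i) =
  lam * \sum_i t i * a i + (1 - lam) * \sum_i t i * b i.
Proof. by rewrite !mulr_sumr -big_split /=; apply: eq_bigr => i _; ring. Qed.

Lemma conjugate_convex (F : (I -> R) -> \bar R) (a b : I -> R) (lam : R) :
  0 <= lam <= 1 ->
  (conjugate F (fun i => (lam * a i + (1 - lam) * b i)%R) <=
   lam%:E * conjugate F a + (1 - lam)%:E * conjugate F b)%E.
Proof.
move=> lam01; have /andP[lam_ge0 lam_le1] := lam01.
have lamC_ge0 : 0 <= 1 - lam by rewrite subr_ge0.
apply: ge_ereal_sup => _ [t _ <-].
have := conjugate_ub F a t; have := conjugate_ub F b t.
case: (F t) => [r | | ] Fb Fa.
- apply: le_trans (leeD (lee_wpmul2l _ Fa) (lee_wpmul2l _ Fb)); rewrite ?lee_fin //.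
  rewrite sum_mul_convex.
  by rewrite [leLHS](_ : _ = lam * (r - \sum_i t i * a i) +
                             (1 - lam) * (r - \sum_i t i * b i)) //; ring.
- move: Fa Fb; rewrite !leye_eq => /eqP-> /eqP->.
  by rewrite convex_comb_id // leey.
- by rewrite addNye leNye.
Qed.

Lemma conjugate_sum_le (K : finType) (F : K -> (I -> R) -> \bar R)
    (w : I -> R) (W : K -> I -> R) :
  (forall i, \sum_k W k i = w i) ->
  (conjugate (fun t => \sum_k F k t) w <= \sum_k conjugate (F k) (W k))%E.
Proof.
move=> sumW; apply: ge_ereal_sup => _ [t _ <-].
have -> : \sum_i t i * w i = \sum_k \sum_i t i * W k i.
  rewrite exchange_big /=; apply: eq_bigr => i _.
  by rewrite -sumW mulr_sumr.
rewrite -sumEFin -fin_num_sumeN // -big_split /=.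
by apply: lee_sum => k _; apply: conjugate_ub.
Qed.

End Conjugate.

Section Pricing.
Variables (R : realType) (V A : finType) (src dst : A -> V) (c : A -> R)
  (A1 : {set A}) (K : finType) (o d : K -> V).
Hypothesis c_ge0 : forall a, 0 <= c a.

Lemma fk0_ge0 k : (0 <= fk src dst c o d k (fun _ : tolled A1 => 0%R))%E.
Proof.
rewrite /fk asboolT; last by [].
apply/ereal_infP => _ [x [x_ge0 _] <-].
have -> : dotT (fun _ : tolled A1 => 0) (restrA1 x) = 0.
  by rewrite /dotT big1 // => i _; rewrite mul0r.
by rewrite addr0 lee_fin; apply: sumr_ge0 => a _; apply: mulr_ge0.
Qed.

Lemma gk_ge0 k (w : tolled A1 -> R) : (0 <= gk src dst c o d k w)%E.
Proof. exact: conjugate_ge0 (fk0_ge0 k). Qed.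

Lemma decomposition_convex (w : tolled A1 -> R) (W1 W2 : K -> tolled A1 -> R)
    (lam : R) : 0 <= lam <= 1 ->
  decomposition w W1 -> decomposition w W2 ->
  decomposition w (fun k i => lam * W1 k i + (1 - lam) * W2 k i).
Proof.
case/andP=> lam_ge0 lam_le1 [W1_ge0 W1_sum] [W2_ge0 W2_sum].
have lamC_ge0 : 0 <= 1 - lam by rewrite subr_ge0.
split=> [k i|i]; first by rewrite addr_ge0 ?mulr_ge0.
by rewrite big_split /= -!mulr_sumr W1_sum W2_sum; ring.
Qed.

Lemma sum_gk_convex (W1 W2 : K -> tolled A1 -> R) (lam : R) :
  0 <= lam <= 1 ->
  (\sum_k gk src dst c o d k (fun i => (lam * W1 k i + (1 - lam) * W2 k i)%R) <=
   lam%:E * \sum_k gk src dst c o d k (W1 k) +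
   (1 - lam)%:E * \sum_k gk src dst c o d k (W2 k))%E.
Proof.
move=> lam01; rewrite !ge0_sume_distrr -?big_split /=; try by move=> k _; apply: gk_ge0.
by apply: lee_sum => k _; exact: (conjugate_convex (fk src dst c o d k)).
Qed.

End Pricing.

Theorem lemma6 (R : realType) (V A : finType) (src dst : A -> V) (c : A -> R)
  (A1 : {set A}) (K : finType) (o d : K -> V)
  (hc : forall a, 0 <= c a)
  (hA1 : A1 != finset.set0) (hA1p : A1 != [set: A])
  (hpath : forall k, connect (untolled_rel src dst A1) (o k) (d k))
  (w : tolled A1 -> R) (hw : forall i, 0 <= w i) :
  forall (W1 W2 : K -> tolled A1 -> R) (lam : R),
    0 <= lam <= 1 ->
    bilevel_feasible src dst c o d w W1 ->
    bilevel_feasible src dst c o d w W2 ->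
    bilevel_feasible src dst c o d w
      (fun k i => lam * W1 k i + (1 - lam) * W2 k i).
Proof.
move=> W1 W2 lam lam01 [dec1 g_eq1] [dec2 g_eq2].
have dec := decomposition_convex lam01 dec1 dec2.
split=> //; apply: le_anti; apply/andP; split.
  exact: (conjugate_sum_le (fk src dst c o d) dec.2).
apply: le_trans (sum_gk_convex src dst o d hc W1 W2 lam01) _.
by rewrite -g_eq1 -g_eq2 convex_comb_id.
Qed.
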